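(* Let $p\in P(k,l)\setminus N(k,l)$ be a pairing with $s=(k+l)/2\ge 4$ strings. (1) If $p\notin E(k,l)$, then some capping $p'$ of $p$ satisfies $p'\notin E$ (i.e. $p'$ is a pairing not in $E$ of the corresponding size). (2) If $p\in E(k,l)\setminus N(k,l)$, then some capping $p'$ of $p$ satisfies $p'\in E\setminus N$.
   Context: $P(k,l)$ is the set of pairings (partitions into 2-element blocks, called strings) of $k$ upper and $l$ lower points; the $k+l$ points are numbered $1,\dots,k+l$ counterclockwise starting from the bottom left, and considered cyclically (as points on the boundary of a disk). Two strings $\{a,b\},\{c,d\}$ cross iff exactly one of $c,d$ lies strictly between $a$ and $b$. $E(k,l)\subset P(k,l)$ consists of the pairings in which each string crosses an even number of other strings; $N(k,l)\subset E(k,l)$ consists of the noncrossing pairings (no two strings cross). For $i=1,\dots,k+l$ (indices mod $k+l$), the capping $p^i$ is the pairing of the remaining $k+l-2$ points obtained by joining the $i$-th and $(i+1)$-th points by a semicircle and deleting these two points, so that the strings through them are concatenated into one string (a closed loop, if it arises, is discarded), the remaining points keeping their cyclic order. A capping of $p$ is any $p^i$. *)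

From mathcomp Require Import all_boot.
Set Implicit Arguments. Unset Strict Implicit. Unset Printing Implicit Defensive.

(* A pairing of n points (points numbered 0..n-1 counterclockwise, i.e. the
   paper's point j+1 is our point j) is encoded as the partner function
   p : nat -> nat, restricted to the domain {0,..,n-1}: a fixed-point-free
   involution of {0,..,n-1}.  The strings are the blocks {x, p x}. *)
Definition is_pairing (n : nat) (p : nat -> nat) : bool :=
  all (fun x => [&& p x < n, p x != x & p (p x) == x]) (iota 0 n).

Definition strictly_between (a b x : nat) : bool := (minn a b < x) && (x < maxn a b).

Definition cross (a b c d : nat) : bool :=
  strictly_between a b c (+) strictly_between a b d.

(* number of strings of p crossing the string through point x;
   each string {y, p y} is counted once, via its smaller endpoint y < p y *)
Definition ncross (n : nat) (p : nat -> nat) (x : nat) : nat :=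
  count (fun y => [&& y < p y, y != x, y != p x & cross x (p x) y (p y)]) (iota 0 n).

Definition isE (n : nat) (p : nat -> nat) : bool :=
  all (fun x => ~~ odd (ncross n p x)) (iota 0 n).

Definition isN (n : nat) (p : nat -> nat) : bool :=
  all (fun x => ncross n p x == 0) (iota 0 n).

(* Capping p^i: join point i and point (i+1) mod n by a semicircle, delete
   these two points, concatenate the strings through them (a closed loop, if
   formed, is discarded), and renumber the remaining n-2 points 0..n-3 in
   increasing order of their old labels (which preserves their cyclic order). *)
Definition cap_rest (n i : nat) : seq nat :=
  [seq x <- iota 0 n | (x != i) && (x != (i.+1 %% n))].

Definition cap_glue (n : nat) (p : nat -> nat) (i : nat) (x : nat) : nat :=
  if p x == i then p (i.+1 %% n)
  else if p x == i.+1 %% n then p i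
  else p x.

Definition cap (n : nat) (p : nat -> nat) (i : nat) : nat -> nat :=
  fun y => index (cap_glue n p i (nth 0 (cap_rest n i) y)) (cap_rest n i).

From mathcomp Require Import all_boot zify.
Set Implicit Arguments. Unset Strict Implicit. Unset Printing Implicit Defensive.

(* Lemma 4.4.  The key fact is a parity characterisation of E: the points
   strictly between the endpoints of a string {x, p x} are two endpoints of
   each string nested in it and one endpoint of each string crossing it, so
   the string crosses an odd number of strings iff x and p x have the same
   parity (ncross_odd, isE_parity).

   Capping at i, i+1 (mod n) relabels each remaining point u by its rank
   index u, i.e. shifts it by the number of capped points below it; this
   shift has a parity independent of u, so parities of sums are preserved,
   and ranks are monotone, so crossings are preserved (section Capping).
   Hence a string away from the cap keeps its parity type and its
   crossings, and the string glued by the cap joins points of opposite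
   parity when all strings of p do.  Finally, on at least 8 points there is
   a cap avoiding one given string, or two crossing strings whose endpoints
   have opposite parities (free_cap2, free_cap_crossing); the theorem
   follows by combining these facts. *)

(* Elements satisfying both predicates are counted twice on the left. *)
Lemma count_xor (T : Type) (s : seq T) (P Q : pred T) :
  count P s + count Q s = (count (predI P Q) s).*2 + count (fun y => P y (+) Q y) s.
Proof. by elim: s => //= y s IH; case: (P y); case: (Q y) => /=; lia. Qed.

Lemma count_split (T : Type) (s : seq T) (P R : pred T) :
  count (fun y => P y && R y) s + count (fun y => ~~ P y && R y) s = count R s.
Proof. by elim: s => //= y s IH; case: (P y); case: (R y) => /=; lia. Qed.

Lemma count_open_interval a b m :
  count (fun w => (a < w) && (w < b)) (iota 0 m) = minn m b - minn m a.+1.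
Proof.
elim: m => [|m IH]; first by rewrite !min0n.
by rewrite -[m.+1]addn1 iotaD count_cat IH /=; case: ltnP => ?; case: ltnP => ? /=; lia.
Qed.

Lemma odd_gap m M : m < M -> odd (M - m.+1) = ~~ odd (m + M).
Proof.
move=> mM; have -> : m + M = (M - m.+1) + m.*2.+1 by lia.
by rewrite oddD oddS odd_double addbT negbK.
Qed.

Lemma odd_chain a b c d : odd (a + b) -> odd (b + c) -> odd (c + d) -> odd (a + d).
Proof. by rewrite !oddD; case: (odd a); case: (odd b); case: (odd c); case: (odd d). Qed.

Lemma sbE a b c :
  strictly_between a b c = if a < b then (a < c) && (c < b) else (b < c) && (c < a).
Proof. by rewrite /strictly_between /minn /maxn; case: ifP. Qed.

Lemma cross_sym a b c d : cross a b c d = cross b a c d.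
Proof. by rewrite /cross /strictly_between minnC maxnC. Qed.

Lemma crossingP n p :
  reflect (exists2 x, x < n & exists2 z, z < n &
             [&& z < p z, z != x, z != p x & cross x (p x) z (p z)])
          (~~ isN n p).
Proof.
apply: (iffP allPn) => [[x] | [x xn [z zn crs]]].
  rewrite mem_iota /ncross -lt0n -has_count => xn /hasP [z].
  by rewrite mem_iota => zn crs; exists x => //; exists z.
exists x; first by rewrite mem_iota.
by rewrite /ncross -lt0n -has_count; apply/hasP; exists z; rewrite ?mem_iota.
Qed.

Section Pairings.
Variables (n : nat) (p : nat -> nat).
Hypothesis pairing_p : is_pairing n p.

Lemma pairingP x : x < n -> [/\ p x < n, p x != x & p (p x) = x].
Proof.
move=> xn; have := allP pairing_p x; rewrite mem_iota add0n xn.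
by move=> /(_ isT) /and3P [pxn pxx /eqP ppx].
Qed.

Lemma partner_inj x y : x < n -> y < n -> p x = p y -> x = y.
Proof.
move=> xn yn pxy.
by case: (pairingP xn) => _ _ <-; case: (pairingP yn) => _ _ <-; rewrite pxy.
Qed.

Lemma perm_partner : perm_eq (map p (iota 0 n)) (iota 0 n).
Proof.
apply: uniq_perm; last first.
- move=> x; rewrite mem_iota add0n; apply/mapP/idP.
    by case=> y; rewrite mem_iota add0n => /pairingP [? _ _] ->.
  by move=> xn; have [? _ ppx] := pairingP xn; exists (p x); rewrite ?mem_iota.
- exact: iota_uniq.
rewrite map_inj_in_uniq ?iota_uniq // => x y; rewrite !mem_iota !add0n.
exact: partner_inj.
Qed.

Lemma count_partner (P : pred nat) :
  count P (iota 0 n) = count (fun y => P (p y)) (iota 0 n).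
Proof. by rewrite -(permP perm_partner) count_map. Qed.

(* Each string has exactly one smaller endpoint, so n is twice the number
   of strings. *)
Lemma pairing_even : ~~ odd n.
Proof.
have up_down : count (fun y => y < p y) (iota 0 n)
             = count (predC (fun y => y < p y)) (iota 0 n).
  rewrite count_partner; apply: eq_in_count => y; rewrite mem_iota add0n /=.
  by move=> /pairingP [_ + ->]; case: ltngtP.
by rewrite -(size_iota 0 n) -(count_predC (fun y => y < p y)) -up_down addnn odd_double.
Qed.

Lemma ncross_odd x : x < n -> odd (ncross n p x) = ~~ odd (x + p x).
Proof.
move=> xn; have [pxn pxx ppx] := pairingP xn.
set sb := strictly_between x (p x); set s := iota 0 n.
have sb_x : sb x = false by rewrite /sb /strictly_between; lia.
have sb_px : sb (p x) = false by rewrite /sb /strictly_between; lia.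
have between : count sb s = maxn x (p x) - (minn x (p x)).+1.
  rewrite (@eq_count _ _ (fun w => (minn x (p x) < w) && (w < maxn x (p x)))) //.
  by rewrite count_open_interval; lia.
(* points between the ends, grouped by the strings through them *)
have by_strings : count sb s = count (fun y => (y < p y) && sb y) s
                             + count (fun y => (y < p y) && sb (p y)) s.
  rewrite -(count_split s (fun y => y < p y) sb); congr (_ + _).
  rewrite count_partner; apply: eq_in_count => y; rewrite mem_iota add0n /=.
  by move=> /pairingP [_ + ->]; case: ltngtP.
(* a string contributes an odd number of points iff it crosses {x, p x} *)
have crossing : count (fun y => ((y < p y) && sb y) (+) ((y < p y) && sb (p y))) s
              = ncross n p x.
  apply: eq_in_count => y _ /=; rewrite /cross -/sb.
  have [->|yx] := eqVneq y x; first by rewrite sb_x sb_px !andbF.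
  have [->|ypx] := eqVneq y (p x); first by rewrite ppx sb_x sb_px !andbF.
  by case: (y < p y).
rewrite -crossing -(addn_min_max x (p x)) -odd_gap; last by lia.
by rewrite -between by_strings count_xor oddD odd_double.
Qed.

Lemma isE_parity : isE n p = all (fun x => odd (x + p x)) (iota 0 n).
Proof.
by apply: eq_in_all => x; rewrite mem_iota add0n => xn; rewrite ncross_odd ?negbK.
Qed.

End Pairings.

Section Capping.
Variables (n i : nat).
Hypotheses (n_ge2 : 1 < n) (i_lt : i < n).
Local Notation j := (i.+1 %% n).
Local Notation rest := (cap_rest n i).

Lemma succ_mod : j = if i.+1 == n then 0 else i.+1.
Proof. by case: eqP => [->|?]; [exact: modnn | apply: modn_small; lia]. Qed.

Lemma j_lt : j < n.
Proof. by rewrite succ_mod; case: (eqVneq i.+1 n) => /= ?; lia. Qed.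

Lemma j_ne : j != i.
Proof. by rewrite succ_mod; case: (eqVneq i.+1 n) => /= ?; lia. Qed.

Lemma mem_rest x : (x \in rest) = [&& x < n, x != i & x != j].
Proof. by rewrite mem_filter mem_iota add0n andbC andbA. Qed.

Lemma rest_uniq : uniq rest.
Proof. exact: filter_uniq (iota_uniq 0 n). Qed.

Lemma rest_prefix x :
  count (fun y => (y != i) && (y != j)) (iota 0 x) + ((i < x) + (j < x)) = x.
Proof.
have ji := j_ne; elim: x => // x IH.
by move: IH; rewrite -[x.+1]addn1 iotaD count_cat /=; set c := count _ _; lia.
Qed.

Lemma rest_size : size rest = n - 2.
Proof.
by rewrite size_filter; have := rest_prefix n; rewrite i_lt j_lt; set c := count _ _; lia.
Qed.

Lemma index_rest u : u \in rest -> index u rest + ((i < u) + (j < u)) = u.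
Proof.
move=> ur; have /and3P [un ui uj] : [&& u < n, u != i & u != j] by rewrite -mem_rest.
have split_iota : iota 0 n = iota 0 u ++ u :: iota u.+1 (n - u.+1).
  by rewrite -{1}(subnKC (ltnW un)) iotaD add0n -(subnSK un).
rewrite /cap_rest split_iota filter_cat index_cat mem_filter mem_iota ltnn andbF /=.
by rewrite ui uj /= eqxx addn0 size_filter rest_prefix.
Qed.

Lemma shift_parity u : u \in rest -> odd ((i < u) + (j < u)) = (i.+1 == n).
Proof.
rewrite mem_rest succ_mod; case: (eqVneq i.+1 n) => /= i1n /and3P [un ui uj].
  by have -> : (i < u) + (0 < u) = 1 by lia.
have -> : (i < u) + (i.+1 < u) = (i < u).*2 by lia.
by rewrite odd_double.
Qed.

Lemma index_parity u v : u \in rest -> v \in rest ->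
  odd (index u rest + index v rest) = odd (u + v).
Proof.
move=> ur vr; rewrite -[in RHS](index_rest ur) -[in RHS](index_rest vr).
move: (shift_parity ur) (shift_parity vr).
move: ((i < u) + _) ((i < v) + _) => su sv su_odd sv_odd.
rewrite !oddD su_odd sv_odd.
by case: (odd (index u rest)); case: (odd (index v rest)); case: (i.+1 == n).
Qed.

Lemma index_mono u v : u \in rest -> v \in rest ->
  (index u rest < index v rest) = (u < v).
Proof.
move=> ur vr; have := index_rest ur; have := index_rest vr; have := j_ne.
by move: ur vr; rewrite !mem_rest; lia.
Qed.

Lemma index_eq u v : u \in rest -> v \in rest ->
  (index u rest == index v rest) = (u == v).
Proof.
move=> ur vr; have := index_rest ur; have := index_rest vr; have := j_ne.
by move: ur vr; rewrite !mem_rest; lia.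
Qed.

Lemma cross_index u v w t : u \in rest -> v \in rest -> w \in rest -> t \in rest ->
  cross (index u rest) (index v rest) (index w rest) (index t rest) = cross u v w t.
Proof. by move=> *; rewrite /cross !sbE !index_mono. Qed.

Lemma index_lt u : u \in rest -> index u rest < n - 2.
Proof. by rewrite -rest_size index_mem. Qed.

Lemma rest_label y : y < n - 2 -> exists2 u, u \in rest & y = index u rest.
Proof.
rewrite -rest_size => y_lt; exists (nth 0 rest y); first exact: mem_nth.
by rewrite index_uniq ?rest_uniq.
Qed.

Variable p : nat -> nat.
Hypothesis pairing_p : is_pairing n p.
Local Notation glue := (cap_glue n p i).

Lemma glue_inv u : u \in rest -> [/\ glue u \in rest, glue u != u & glue (glue u) = u].
Proof.
move=> ur; have /and3P [un ui uj] : [&& u < n, u != i & u != j] by rewrite -mem_rest.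
have [pun puu ppu] := pairingP pairing_p un.
have [pin pii ppi] := pairingP pairing_p i_lt.
have inj := partner_inj pairing_p; have ji := j_ne; have jn := j_lt.
have [pjn pjj ppj] := pairingP pairing_p jn.
rewrite /cap_glue !mem_rest; case: (eqVneq (p u) i) => [pui|pui].
  have pj_i : p j != i.
    by apply: contra_neq uj => pji; apply: inj; rewrite ?pui ?pji.
  have pj_u : p j != u by apply: contra_neq ji => pju; rewrite -[RHS]pui -pju ppj.
  have u_pi : u = p i by rewrite -pui ppu.
  by rewrite ppj eqxx (negbTE ji) -u_pi pjn pj_i pjj pj_u.
case: (eqVneq (p u) j) => [puj|puj].
  have pi_j : p i != j.
    by apply: contra_neq ui => pij; apply: inj; rewrite ?puj ?pij.
  have pi_u : p i != u by apply: contra_neq pui => <-; rewrite ppi.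
  have u_pj : u = p j by rewrite -puj ppu.
  by rewrite ppi eqxx -u_pj pin pi_j pii pi_u.
by rewrite ppu (negbTE ui) (negbTE uj) pun pui puj puu.
Qed.

Lemma cap_index u : u \in rest -> cap n p i (index u rest) = index (glue u) rest.
Proof. by move=> ur; rewrite /cap nth_index. Qed.

Lemma cap_keeps_string u : u \in rest -> p u \in rest ->
  cap n p i (index u rest) = index (p u) rest.
Proof.
by move=> ur; rewrite cap_index // mem_rest /cap_glue => /and3P [_ /negbTE -> /negbTE ->].
Qed.

Lemma cap_pairing : is_pairing (n - 2) (cap n p i).
Proof.
apply/allP => y; rewrite mem_iota add0n => /rest_label [u ur ->].
have [gr gu ggu] := glue_inv ur.
by rewrite !cap_index // ggu index_lt // index_eq // gu eqxx.
Qed.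

(* The two capped points have opposite parities, since n is even. *)
Lemma capped_odd : odd (i + j).
Proof.
have := pairing_even pairing_p; rewrite succ_mod.
case: (eqVneq i.+1 n) => [<-|_ _] /=; first by rewrite addn0 negbK.
by rewrite addnS oddS addnn odd_double.
Qed.

(* If every string of p joins points of opposite parity, so does every
   string of the capping; for the glued string this is because its two
   halves and the cap each join points of opposite parity. *)
Lemma cap_isE : (forall y, y < n -> odd (y + p y)) -> isE (n - 2) (cap n p i).
Proof.
move=> odd_p; rewrite (isE_parity cap_pairing); apply/allP => y.
rewrite mem_iota add0n => /rest_label [u ur ->]; have [gr _ _] := glue_inv ur.
have /and3P [un _ _] : [&& u < n, u != i & u != j] by rewrite -mem_rest.
rewrite cap_index // index_parity // /cap_glue.
case: (eqVneq (p u) i) => [pui|_].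
  apply: (@odd_chain u i j); last exact/odd_p/j_lt.
    by rewrite -pui odd_p.
  exact: capped_odd.
case: (eqVneq (p u) j) => [puj|_]; last exact: odd_p.
apply: (@odd_chain u j i); last exact: odd_p.
  by rewrite -puj odd_p.
by rewrite addnC capped_odd.
Qed.

Lemma cap_not_isE u : u \in rest -> p u \in rest -> ~~ odd (u + p u) ->
  ~~ isE (n - 2) (cap n p i).
Proof.
move=> ur pur even_u; rewrite (isE_parity cap_pairing); apply/allPn.
exists (index u rest); first by rewrite mem_iota index_lt.
by rewrite cap_keeps_string // index_parity.
Qed.

Lemma cap_not_isN x z : x \in rest -> p x \in rest -> z \in rest -> p z \in rest ->
  [&& z < p z, z != x, z != p x & cross x (p x) z (p z)] ->
  ~~ isN (n - 2) (cap n p i).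
Proof.
move=> xr pxr zr pzr crs; apply/crossingP.
exists (index x rest); first exact: index_lt.
exists (index z rest); first exact: index_lt.
by rewrite !cap_keeps_string // index_mono // !index_eq // cross_index.
Qed.

End Capping.

(* Four points (listed in increasing order, repetitions allowed) on at least
   8 positions leave some pair of adjacent positions free, unless they are
   evenly spaced on exactly 8 positions, which c != a + 4 excludes. *)
Lemma free_cap n a b c d : 8 <= n -> a <= b -> b <= c -> c <= d -> d < n -> c != a + 4 ->
  exists2 i, i < n & [/\ a \in cap_rest n i, b \in cap_rest n i,
                         c \in cap_rest n i & d \in cap_rest n i].
Proof.
move=> n8 ab bc cd dn ca.
have [a2|a1] := leqP 2 a.
  by exists 0; last rewrite !mem_rest modn_small; try split; lia.
have [b3|b3] := leqP (a + 3) b.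
  by exists a.+1; last rewrite !mem_rest modn_small; try split; lia.
have [c3|c3] := leqP (b + 3) c.
  by exists b.+1; last rewrite !mem_rest modn_small; try split; lia.
have [d3|d3] := leqP (c + 3) d.
  by exists c.+1; last rewrite !mem_rest modn_small; try split; lia.
have [n3|n3] := leqP (d + 3) n.
  by exists d.+1; last rewrite !mem_rest modn_small; try split; lia.
(* all gaps are at most 2, so 0 < a and d + 2 = n: the last pair is free *)
by exists n.-1; last rewrite !mem_rest prednK ?modnn; try split; lia.
Qed.

Lemma free_cap2 n x y : 8 <= n -> x < n -> y < n ->
  exists2 i, i < n & x \in cap_rest n i /\ y \in cap_rest n i.
Proof.
move=> n8; wlog xy : x y / x <= y => [sym xn yn | xn yn].
  have [/sym/(_ xn yn) // | /ltnW yx] := leqP x y.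
  by have [i i_n [yr xr]] := sym y x yx yn xn; exists i.
have x4 : x != x + 4 by lia.
by have [i i_n [xr _ _ yr]] := free_cap n8 (leqnn x) (leqnn x) xy yn x4; exists i.
Qed.

Lemma free_cap_crossing n x y z w : 8 <= n -> x < n -> y < n -> z < n -> w < n ->
  odd (x + y) -> odd (z + w) -> z < w -> cross x y z w ->
  exists2 i, i < n & [/\ x \in cap_rest n i, y \in cap_rest n i,
                         z \in cap_rest n i & w \in cap_rest n i].
Proof.
move=> n8 xn yn zn wn.
have far u v : odd (u + v) -> v != u + 4.
  by move=> uv; have := odd_double_half (u + v); rewrite uv; lia.
wlog xy : x y xn yn / x < y => [sym oxy ozw zw crs | oxy ozw zw].
  case: (ltngtP x y) => [xy | yx | exy]; first exact: sym.
  - have oyx : odd (y + x) by rewrite addnC.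
    have cyx : cross y x z w by rewrite cross_sym.
    by have [i i_n [yr xr zr wr]] := sym y x yn xn yx oyx ozw zw cyx; exists i.
  - by move: oxy; rewrite exy addnn odd_double.
rewrite /cross !sbE xy.
case: (boolP ((x < z) && (z < y))) => [/andP [xz zy] | zxy] /= wxy.
  (* x < z < y <= w *)
  have yw : y <= w by lia.
  have [i i_n [xr zr yr wr]] := free_cap n8 (ltnW xz) (ltnW zy) yw wn (far _ _ oxy).
  by exists i.
(* z <= x < w < y *)
have zx : z <= x by lia.
have /andP [xw wy] := wxy.
have [i i_n [zr xr wr yr]] := free_cap n8 zx (ltnW xw) (ltnW wy) yn (far _ _ ozw).
by exists i.
Qed.

Theorem lemma4p4 (k l : nat) (p : nat -> nat) :
  is_pairing (k + l) p ->
  ~~ isN (k + l) p ->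
  4 <= (k + l)./2 ->
  (~~ isE (k + l) p ->
     exists i : nat, (i < k + l) && ~~ isE (k + l - 2) (cap (k + l) p i)) /\
  (isE (k + l) p ->
     exists i : nat, [&& i < k + l, isE (k + l - 2) (cap (k + l) p i)
                       & ~~ isN (k + l - 2) (cap (k + l) p i)]).
Proof.
move: (k + l) => n pairing_p not_N half_ge4.
have n8 : 8 <= n by lia.
have n2 : 1 < n by lia.
split => [not_E | is_E].
  (* (1): cap away from a string joining points of equal parity *)
  move: not_E; rewrite (isE_parity pairing_p) => /allPn [x]; rewrite mem_iota => xn even_x.
  have [pxn _ _] := pairingP pairing_p xn.
  have [i i_n [xr pxr]] := free_cap2 n8 xn pxn.
  by exists i; rewrite i_n (cap_not_isE n2 i_n pairing_p xr pxr).
(* (2): cap away from two crossing strings, all strings having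
   endpoints of opposite parity *)
have odd_p y : y < n -> odd (y + p y).
  move: is_E; rewrite (isE_parity pairing_p) => /allP odd_p yn.
  by apply: odd_p; rewrite mem_iota.
have [x xn [z zn crs]] := crossingP _ _ not_N.
have /and4P [zpz _ _ cr] := crs.
have [pxn _ _] := pairingP pairing_p xn; have [pzn _ _] := pairingP pairing_p zn.
have [i i_n [xr pxr zr pzr]] :=
  free_cap_crossing n8 xn pxn zn pzn (odd_p x xn) (odd_p z zn) zpz cr.
exists i; rewrite i_n (cap_isE n2 i_n pairing_p odd_p) /=.
exact: (cap_not_isN n2 i_n xr pxr zr pzr crs).
Qed.
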